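(* Let an explicit non-confluent DJ-irreducible Runge--Kutta method $(A,b)$ be given such that at least one entry of the matrix $A$ or of the vector $b$ is negative. Then there exist nonnegative initial data and a choice of nonnegative functions $q_k$ such that the numerical solution of $$u_k'(t)=q_k(u(t),t)\,\frac{u_{k-1}(t)-u_k(t)}{\Delta x},\quad k=1,\dots,N,\qquad u_0:=u_N,$$ obtained with the method includes a negative value. Consequently $\gamma(A,b)=0$.
   Context: An $m$-stage explicit Runge--Kutta method has strictly lower-triangular Butcher matrix $A=(a_{ij})\in\mathbb{R}^{m\times m}$, weight vector $b\in\mathbb{R}^m$ and nodes $c_i=\sum_ja_{ij}$; non-confluent means the $c_i$ are pairwise distinct. It is DJ-reducible if there is a nonempty set $S\subseteq\{1,\dots,m\}$ of stage indices with $b_j=0$ for all $j\in S$ and $a_{ij}=0$ for all $i\notin S$, $j\in S$ (i.e. the stages in $S$ do not affect the result); otherwise DJ-irreducible. Applied to the ODE system with step $\Delta t$: $y^i_k=u^n_k+\sum_{j<i}a_{ij}\xi^j_k(y^j_{k-1}-y^j_k)$, $u^{n+1}_k=u^n_k+\sum_ib_i\xi^i_k(y^i_{k-1}-y^i_k)$, with $\xi^j_k=\frac{\Delta t}{\Delta x}q_k(y^j,t_n+c_j\Delta t)$ and periodic indices. Treating the $\xi^j_\ell$ as independent variables on the grid $\ell\in\mathbb{Z}$, $u^{n+1}_k=\sum_{i=0}^mP_i(\xi)u^n_{k-i}$ for polynomials $P_i$ (independent of $k$) in the $m(m+1)/2$ variables $\xi^j_\ell$, $1\le j\le m$, $k-(m-j)\le\ell\le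 k$. The step-size coefficient is $\gamma(A,b)=\sup\{\delta\ge0:P_i(\xi)\ge0$ for all $0\le i\le m$, all $\xi\in[0,\delta]^{m(m+1)/2}\}$ (or $0$ if the set is empty). *)

From HB Require Import structures.
From mathcomp Require Import all_boot all_order all_algebra.
From mathcomp Require Import all_classical all_reals ereal.
Set Implicit Arguments. Unset Strict Implicit. Unset Printing Implicit Defensive.
Import Order.TTheory GRing.Theory Num.Theory.
Local Open Scope ring_scope.

(* Stage indices are 0-based: stage i of the paper is stage i-1 here. *)
Section RK.
Variables (R : realType) (m : nat).

Definition Aent (A : 'M[R]_m) (i j : nat) : R :=
  match @insub _ (fun x => x < m)%N _ i, @insub _ (fun x => x < m)%N _ j with
  | Some i', Some j' => A i' j'
  | _, _ => 0
  end.
Definition bent (b : 'rV[R]_m) (i : nat) : R :=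
  match @insub _ (fun x => x < m)%N 'I_m i with
  | Some i' => b 0 i'
  | None => 0
  end.

Definition explicit_RK (A : 'M[R]_m) : Prop :=
  forall i j : 'I_m, (i <= j)%N -> A i j = 0.

Definition node (A : 'M[R]_m) (i : 'I_m) : R := \sum_(j < m) A i j.

Definition non_confluent (A : 'M[R]_m) : Prop := injective (node A).

Definition DJ_reducible (A : 'M[R]_m) (b : 'rV[R]_m) : Prop :=
  exists S : {set 'I_m}, S != finset.set0 /\
    (forall j, j \in S -> b 0 j = 0) /\
    (forall i j, i \notin S -> j \in S -> A i j = 0).

Definition DJ_irreducible A b : Prop := ~ DJ_reducible A b.

Definition has_negative_coef (A : 'M[R]_m) (b : 'rV[R]_m) : Prop :=
  (exists i j, A i j < 0) \/ (exists j, b 0 j < 0).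

(* grid 'I_N (k = 1..N of the paper with u_0 := u_N); the periodic left
   neighbour of k is ord_pred N k.  q k y t is q_k(y,t).                *)
Variable N : nat.
Notation vec := ('I_N -> R).

Section Step.
Variables (A : 'M[R]_m) (b : 'rV[R]_m) (dt dx tn : R)
          (q : 'I_N -> vec -> R -> R) (u : vec).

Definition cnat (j : nat) : R := \sum_(l < m) Aent A j l.

Definition xi (y : vec) (j : nat) (k : 'I_N) : R :=
  dt / dx * q k y (tn + cnat j * dt).

Fixpoint stages (n : nat) : seq vec :=
  match n with
  | 0 => [::]
  | n'.+1 =>
      let s := stages n' in
      rcons s (fun k => u k + \sum_(j < n')
        Aent A n' j * xi (nth u s j) j k * (nth u s j (ord_pred k) - nth u s j k))
  end.

Definition stage (i : nat) : vec := nth u (stages m) i.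

Definition rk_step : vec := fun k =>
  u k + \sum_(i < m) bent b i * xi (stage i) i k * (stage i (ord_pred k) - stage i k).
End Step.

Fixpoint rk_sol A b dt dx q (u0 : vec) (n : nat) : vec :=
  match n with
  | 0 => u0
  | n'.+1 => rk_step A b dt dx (n'%:R * dt) q (rk_sol A b dt dx q u0 n')
  end.

End RK.

Section Gamma.
Variables (R : realType) (m : nat) (A : 'M[R]_m) (b : 'rV[R]_m).
Local Open Scope ring_scope.

(* the xi^j_l are independent variables on the grid l in Z:
   xiv j l, stage j (0-based), grid point l : int.  Linear scheme
   y^i_k = u_k + sum_{j<i} a_ij xi^j_k (y^j_(k-1) - y^j_k). *)
Fixpoint zstages (xiv : nat -> int -> R) (u : int -> R) (n : nat)
  : seq (int -> R) :=
  match n with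
  | 0 => [::]
  | n'.+1 =>
      let s := zstages xiv u n' in
      rcons s (fun k => u k + \sum_(j < n')
        Aent A n' j * xiv j k * (nth u s j (k - 1) - nth u s j k))
  end.

Definition zstep (xiv : nat -> int -> R) (u : int -> R) : int -> R :=
  fun k => let Y i := nth u (zstages xiv u m) i in
  u k + \sum_(i < m) bent b i * xiv i k * (Y i (k - 1) - Y i k).

(* P_i(xi) = coefficient of u_{k-i} in u^{n+1}_k (computed at k = 0,
   the P_i being independent of k): apply the step to the unit vector
   supported at -i. *)
Definition Pcoef (i : nat) (xiv : nat -> int -> R) : R :=
  zstep xiv (fun l => if l == - (i%:Z) then 1 else 0) 0.

(* delta admissible: P_i(xi) >= 0 for all 0 <= i <= m and all xi with the
   m(m+1)/2 variables xi^j_l (0-based j < m, -(m-1-j) <= l <= 0) in [0,delta] *)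
Definition gamma_admissible (delta : R) : Prop :=
  0 <= delta /\
  forall xiv : nat -> int -> R,
    (forall (j : nat) (l : int), (j < m)%N ->
        - ((m - 1 - j)%N%:Z) <= l <= 0 -> 0 <= xiv j l <= delta) ->
    forall i : nat, (i <= m)%N -> 0 <= Pcoef i xiv.

Local Open Scope classical_set_scope.
Definition gamma : \bar R :=
  if `[< gamma_admissible = set0 >] then 0%E
  else ereal_sup [set (d%:E)%E | d in gamma_admissible].
End Gamma.

From HB Require Import structures.
From mathcomp Require Import all_boot all_order all_algebra.
From mathcomp Require Import all_classical all_reals ereal.
From mathcomp Require Import zify ring.
Set Implicit Arguments. Unset Strict Implicit. Unset Printing Implicit Defensive.
Import Order.TTheory GRing.Theory Num.Theory.
Local Open Scope ring_scope.

(* Call a chain a strictly increasing sequence of stages c 0 < ... < c r, with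
   weight b_{c r} a_{c r, c (r-1)} ... a_{c 1, c 0}.  DJ-irreducibility gives
   a chain of nonzero weight from every stage, and a negative coefficient then
   yields a chain of negative weight (prepend j to the chain from i when
   a_ij < 0, if needed).  Put a unit impulse at one grid point and let xi^{c t}
   be nonzero only at the (t+1)-st point to its right: each stage of the chain
   moves the impulse one point, so after one step the value r+1 points to the
   right is eps^(r+1) times the weight.  The same choice of the xi makes
   P_{r+1} negative for every delta > 0, so gamma = 0. *)

Section Entries.
Variables (R : realType) (m : nat) (A : 'M[R]_m) (b : 'rV[R]_m).

Lemma AentE (i j : 'I_m) : Aent A i j = A i j.
Proof. by rewrite /Aent !valK. Qed.

Lemma bentE (i : 'I_m) : bent b i = b 0 i.
Proof. by rewrite /bent valK. Qed.

Lemma cnatE (j : 'I_m) : cnat A j = node A j.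
Proof. by apply: eq_bigr => l _; rewrite AentE. Qed.

End Entries.

Section Chains.
Variables (R : realType) (m : nat) (A : 'M[R]_m) (b : 'rV[R]_m).

Definition chain (r : nat) (c : nat -> nat) : Prop :=
  (forall t, (t < r)%N -> (c t < c t.+1)%N) /\ (c r < m)%N.

Fixpoint chain_prod (c : nat -> nat) (t : nat) : R :=
  if t is t'.+1 then Aent A (c t) (c t') * chain_prod c t' else 1.

Definition chain_weight (r : nat) (c : nat -> nat) : R :=
  bent b (c r) * chain_prod c r.

Definition chain_cons (j : nat) (c : nat -> nat) : nat -> nat :=
  fun t => if t is t'.+1 then c t' else j.

Lemma chain_mono r c t t' : chain r c -> (t <= t' <= r)%N -> (c t <= c t')%N.
Proof.
move=> [c_lt _] /andP[]; elim: t' => [|t' IH]; first by rewrite leqn0 => /eqP->.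
rewrite leq_eqVlt => /orP[/eqP-> //|tt'] t'r.
exact: leq_trans (IH tt' (ltnW t'r)) (ltnW (c_lt _ t'r)).
Qed.

Lemma chain_ltm r c t : chain r c -> (t <= r)%N -> (c t < m)%N.
Proof.
by move=> ch tr; apply: leq_ltn_trans (chain_mono ch _) ch.2; rewrite tr leqnn.
Qed.

Lemma chain_geq r c t : chain r c -> (t <= r)%N -> (t <= c t)%N.
Proof.
move=> [c_lt _]; elim: t => [|t IH] // tr.
exact: leq_ltn_trans (IH (ltnW tr)) (c_lt _ tr).
Qed.

Lemma chain_const (i : 'I_m) : chain 0 (fun=> i).
Proof. by split. Qed.

Lemma chain_weight_const (i : 'I_m) : chain_weight 0 (fun=> i) = b 0 i.
Proof. by rewrite /chain_weight mulr1 bentE. Qed.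

Lemma chain_cons_chain j r c : (j < c 0)%N -> chain r c -> chain r.+1 (chain_cons j c).
Proof. by move=> jc [c_lt cr]; split=> // -[|t] //= /c_lt. Qed.

Lemma chain_prod_cons j c t :
  chain_prod (chain_cons j c) t.+1 = chain_prod c t * Aent A (c 0) j.
Proof.
elim: t => [|t IH]; first by rewrite /= mul1r mulr1.
by rewrite -[LHS]/(Aent A (c t.+1) (c t) * chain_prod (chain_cons j c) t.+1) IH mulrA.
Qed.

Lemma chain_weight_cons j r c :
  chain_weight r.+1 (chain_cons j c) = chain_weight r c * Aent A (c 0) j.
Proof. by rewrite /chain_weight chain_prod_cons mulrA. Qed.

Hypotheses (A_explicit : explicit_RK A) (Ab_irr : DJ_irreducible A b).

Lemma explicit_RK_ltn (i j : 'I_m) : A i j != 0 -> (j < i)%N.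
Proof. by apply: contraNT; rewrite -leqNgt => ij; rewrite A_explicit. Qed.

(* The stages from which no chain of nonzero weight starts form a set S
   witnessing DJ-reducibility. *)
Lemma chain_nonzero_weight (i : 'I_m) :
  exists r c, [/\ c 0 = i :> nat, chain r c & chain_weight r c != 0].
Proof.
pose reach (j : 'I_m) := exists r c, [/\ c 0 = j :> nat, chain r c & chain_weight r c != 0].
apply: contrapT => not_reach_i; apply: Ab_irr.
exists [set j | ~~ `[< reach j >]]; split; [|split].
- by apply/set0Pn; exists i; rewrite inE; apply/asboolPn.
- move=> j; rewrite inE => /asboolPn not_reach_j; apply: contrapT => /eqP bj.
  apply: not_reach_j; exists 0%N, (fun=> val j).
  by rewrite chain_weight_const; split=> //; apply: chain_const.
- move=> i' j; rewrite !inE negbK => /asboolP [r [c [c0 ch w]]] /asboolPn not_reach_j.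
  apply: contrapT => /eqP Aij; apply: not_reach_j; exists r.+1, (chain_cons j c).
  split=> //; first by apply: chain_cons_chain => //; rewrite c0 explicit_RK_ltn.
  by rewrite chain_weight_cons c0 AentE mulf_neq0.
Qed.

(* A negative a_ij is appended to a nonzero-weight chain from i unless that
   chain already has negative weight. *)
Lemma chain_negative_weight :
  has_negative_coef A b -> exists r c, chain r c /\ chain_weight r c < 0.
Proof.
case=> [[i [j Aij]]|[j bj]]; last first.
  by exists 0%N, (fun=> val j); rewrite chain_weight_const; split=> //; apply: chain_const.
have [r [c [c0 ch w]]] := chain_nonzero_weight i.
have [w_neg|w_pos] := ltrP (chain_weight r c) 0; first by exists r, c.
exists r.+1, (chain_cons j c); split.
  by apply: chain_cons_chain => //; rewrite c0 explicit_RK_ltn // lt_eqF.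
by rewrite chain_weight_cons c0 AentE pmulr_rlt0 // lt_def w.
Qed.

End Chains.

(* The scheme with the xi frozen to given values X j k, on a grid G whose left
   neighbour map is pr: both [stages] (G = 'I_N) and [zstages] (G = int) are
   instances. *)
Section FrozenScheme.
Variables (R : realType) (m : nat) (A : 'M[R]_m) (b : 'rV[R]_m).
Variables (G : Type) (pr : G -> G) (u : G -> R) (X : nat -> G -> R).

Fixpoint lin_stages (n : nat) : seq (G -> R) :=
  if n is n'.+1 then
    let s := lin_stages n' in
    rcons s (fun k => u k + \sum_(j < n')
      Aent A n' j * X j k * (nth u s j (pr k) - nth u s j k))
  else [::].

Lemma size_lin_stages n : size (lin_stages n) = n.
Proof. by elim: n => //= n IH; rewrite size_rcons IH. Qed.

Lemma nth_lin_stages n s : (s < n)%N ->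
  nth u (lin_stages n) s = nth u (lin_stages s.+1) s.
Proof.
elim: n => // n IH; rewrite ltnS leq_eqVlt => /orP[/eqP-> //|sn].
by rewrite /= nth_rcons size_lin_stages sn IH.
Qed.

Definition lin_stage (s : nat) : G -> R := nth u (lin_stages m) s.

Lemma lin_stageE s k : (s < m)%N ->
  lin_stage s k = u k + \sum_(j < s) Aent A s j * X j k * (lin_stage j (pr k) - lin_stage j k).
Proof.
move=> sm; rewrite /lin_stage nth_lin_stages //= nth_rcons size_lin_stages ltnn eqxx.
congr (_ + _); apply: eq_bigr => j _.
by rewrite (nth_lin_stages (ltn_ord j)) (nth_lin_stages (ltn_trans (ltn_ord j) sm)).
Qed.

Definition lin_step (k : G) : R :=
  u k + \sum_(i < m) bent b i * X i k * (lin_stage i (pr k) - lin_stage i k).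

(* Along a chain c of stages laid out on consecutive grid points g 0, ..., g r.+1,
   the initial datum 1 at g 0 is carried one grid point to the right by each
   stage of the chain, picking up a factor eps * a_{c t.+1, c t}. *)
Variables (r : nat) (c : nat -> nat) (g : nat -> G) (eps : R).
Hypotheses (c_chain : chain m r c)
  (g_pred : forall t, (t <= r)%N -> pr (g t.+1) = g t)
  (g_inj : forall t t', (t <= r.+1)%N -> (t' <= r.+1)%N -> g t = g t' -> t = t')
  (u_g0 : u (g 0) = 1) (u_gS : forall t, (t <= r)%N -> u (g t.+1) = 0)
  (X_chain : forall t, (t <= r)%N -> X (c t) (g t.+1) = eps)
  (X_off_chain : forall j k, (j < m)%N ->
     (forall t, (t <= r)%N -> k = g t.+1 -> j <> c t) -> X j k = 0).

Lemma X_g0 j : (j < m)%N -> X j (g 0) = 0.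
Proof.
by move=> jm; apply: X_off_chain => // t tr /g_inj; rewrite ltnS tr => /(_ isT isT).
Qed.

Lemma X_gS j t : (j < m)%N -> (t <= r)%N -> X j (g t.+1) = if j == c t then eps else 0.
Proof.
move=> jm tr; case: eqP => [->|jct]; first exact: X_chain.
by apply: X_off_chain => // t' t'r /g_inj; rewrite !ltnS tr t'r => /(_ isT isT) [<-].
Qed.

Lemma sum_X_gS n t (w D : nat -> R) : (n <= m)%N -> (t <= r)%N ->
  \sum_(j < n) w j * X j (g t.+1) * D j =
    if (c t < n)%N then w (c t) * eps * D (c t) else 0.
Proof.
move=> nm tr; rewrite -(big_ord1_eq +%R (fun j => w j * eps * D j)) [RHS]big_mkcond.
apply: eq_bigr => j _.
rewrite X_gS ?(leq_trans (ltn_ord j)) //.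
by case: eqP => [->|_]; rewrite ?mulr0 ?mul0r.
Qed.

Lemma lin_stage_g0 s : (s < m)%N -> lin_stage s (g 0) = 1.
Proof.
move=> sm; rewrite lin_stageE // u_g0 big1 ?addr0 // => j _.
by rewrite X_g0 ?mulr0 ?mul0r // (ltn_trans (ltn_ord j)).
Qed.

Lemma lin_stage_gS s t : (s < m)%N -> (t <= r)%N -> lin_stage s (g t.+1) =
  if (c t < s)%N then Aent A s (c t) * eps * lin_stage (c t) (g t) else 0.
Proof.
elim/ltn_ind: s => s IH sm tr; rewrite lin_stageE // u_gS // add0r.
rewrite (sum_X_gS (Aent A s) (fun j => lin_stage j _ - lin_stage j _) (ltnW sm) tr).
case: ifP => // cts.
by rewrite g_pred // (IH (c t) cts (ltn_trans cts sm) tr) ltnn subr0.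
Qed.

Lemma lin_stage_chain t : (t <= r)%N -> lin_stage (c t) (g t) = eps ^+ t * chain_prod A c t.
Proof.
have ctm := chain_ltm c_chain.
elim: t => [|t IH] tr; first by rewrite lin_stage_g0 ?mul1r ?ctm.
have [c_lt _] := c_chain.
rewrite (lin_stage_gS (ctm _ tr) (ltnW tr)) c_lt // IH ?(ltnW tr) // exprS /=.
ring.
Qed.

Lemma lin_step_chain_end : lin_step (g r.+1) = eps ^+ r.+1 * chain_weight A b r c.
Proof.
rewrite /lin_step u_gS // add0r.
rewrite (sum_X_gS (bent b) (fun j => lin_stage j _ - lin_stage j _)) // c_chain.2.
rewrite g_pred //.
rewrite lin_stage_gS ?c_chain.2 // ltnn subr0 lin_stage_chain // /chain_weight exprS.
ring.
Qed.

End FrozenScheme.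

Section Applications.
Variables (R : realType) (m : nat) (A : 'M[R]_m) (b : 'rV[R]_m).

Lemma rk_step_lin N dt dx tn (q : 'I_N -> ('I_N -> R) -> R -> R) u :
  (forall k y y' t, q k y t = q k y' t) ->
  rk_step A b dt dx tn q u = lin_step A b (@ord_pred N) u (xi A dt dx tn q u).
Proof.
move=> q_y.
have E n : stages A dt dx tn q u n = lin_stages A (@ord_pred N) u (xi A dt dx tn q u) n.
  elim: n => //= n ->; congr rcons; apply: funext => k; congr (_ + _).
  by apply: eq_bigr => j _; rewrite /xi (q_y k _ u).
apply: funext => k; rewrite /rk_step /lin_step /stage /lin_stage E; congr (_ + _).
by apply: eq_bigr => i _; rewrite /xi (q_y k _ u).
Qed.

Lemma zstep_lin xiv u : zstep A b xiv u = lin_step A b (fun k => k - 1) u xiv.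
Proof.
have E n : zstages A xiv u n = lin_stages A (fun k => k - 1) u xiv n by elim: n => //= n ->.
by apply: funext => k; rewrite /zstep /lin_step /lin_stage E.
Qed.

(* The grid has r.+2 points g 0, ..., g r.+1; q switches on (value 1) only at
   g t.+1 and at the time node of stage c t, which by non-confluence selects
   that single stage. *)
Lemma rk_sol_negative r c :
  non_confluent A -> chain m r c -> chain_weight A b r c < 0 ->
  exists (N : nat) (dt dx : R) (q : 'I_N -> ('I_N -> R) -> R -> R) (u0 : 'I_N -> R),
    (0 < N)%N /\ 0 < dt /\ 0 < dx /\
    (forall k y t, 0 <= q k y t) /\
    (forall k, 0 <= u0 k) /\
    exists (n : nat) (k : 'I_N), rk_sol A b dt dx q u0 n k < 0.
Proof.
move=> nc ch w_neg.
pose g (t : nat) : 'I_r.+2 := inord t.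
pose q (k : 'I_r.+2) (y : 'I_r.+2 -> R) (tau : R) : R :=
  if [exists t : 'I_r.+1, (k == g t.+1) && (tau == cnat A (c t))] then 1 else 0.
pose u0 (k : 'I_r.+2) : R := if k == g 0 then 1 else 0.
have g_inj t t' : (t <= r.+1)%N -> (t' <= r.+1)%N -> g t = g t' -> t = t'.
  by move=> tr t'r /(congr1 val); rewrite /= !inordK.
have X_E j k : xi A 1 1 (0%:R * 1) q u0 j k = q k u0 (cnat A j).
  by rewrite /xi divr1 mul1r mul0r add0r mulr1.
exists r.+2, 1, 1, q, u0; do 3!split=> //.
split; first by move=> k y t; rewrite /q; case: ifP.
split; first by move=> k; rewrite /u0; case: ifP.
exists 1%N, (g r.+1); rewrite /= rk_step_lin //.
rewrite (@lin_step_chain_end _ _ A b _ _ _ _ r c g 1 ch); first by rewrite expr1n mul1r.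
- move=> t tr; apply: val_inj; rewrite /= !inordK ?ltnS ?(leq_trans tr) //.
  by rewrite addSn /= modnDr modn_small // ltnS (leq_trans tr).
- exact: g_inj.
- by rewrite /u0 eqxx.
- by move=> t tr; rewrite /u0; case: eqP => // /g_inj; rewrite ltnS tr => /(_ isT isT).
- move=> t tr; rewrite X_E /q; case: existsP => // -[].
  by exists (Ordinal (tr : (t < r.+1)%N)); rewrite !eqxx.
- move=> j k jm off; rewrite X_E /q; case: existsP => // -[t /andP[/eqP kt /eqP ct]].
  have tr : (t <= r)%N by rewrite -ltnS.
  have := nc (Ordinal jm) (Ordinal (chain_ltm ch tr)).
  rewrite -!cnatE /= ct => /(_ erefl) /(congr1 val) /=.
  by move/(off t tr kt).
Qed.

(* Setting xi^{c t} := d at grid point t - r, and all other variables to 0,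
   makes P_{r+1} = d ^+ r.+1 * chain_weight. *)
Lemma gamma_admissible_le0 r c d : chain m r c -> chain_weight A b r c < 0 ->
  gamma_admissible A b d -> d <= 0.
Proof.
move=> ch w_neg [d_ge0 adm]; rewrite leNgt; apply/negP => d_gt0.
pose g (t : nat) : int := t%:Z - r.+1%:Z.
pose xiv (j : nat) (l : int) : R :=
  if [exists t : 'I_r.+1, (l == g t.+1) && (j == c t)] then d else 0.
have rm : (r.+1 <= m)%N := leq_ltn_trans (chain_geq ch (leqnn r)) ch.2.
have xiv_range j l : (j < m)%N -> - (m - 1 - j)%N%:Z <= l <= 0 -> 0 <= xiv j l <= d.
  by move=> _ _; rewrite /xiv; case: ifP; rewrite lexx d_ge0.
have := adm xiv xiv_range r.+1 rm; apply/negP; rewrite -ltNge.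
have -> : Pcoef A b r.+1 xiv =
    lin_step A b (fun k => k - 1) (fun l => if l == g 0 then 1 else 0) xiv (g r.+1).
  by rewrite /Pcoef zstep_lin /g subrr sub0r.
rewrite (@lin_step_chain_end _ _ A b _ _ _ _ r c g d ch).
- by rewrite pmulr_rlt0 // exprn_gt0.
- by move=> t tr; rewrite /g; lia.
- by move=> t t' _ _; rewrite /g => /addIr /eqP; rewrite eqz_nat => /eqP.
- by rewrite eqxx.
- by move=> t tr; case: eqP => //; rewrite /g; lia.
- move=> t tr; rewrite /xiv; case: existsP => // -[].
  by exists (Ordinal (tr : (t < r.+1)%N)); rewrite !eqxx.
- move=> j k jm off; rewrite /xiv; case: existsP => // -[t /andP[/eqP kt /eqP jct]].
  by have := off t; rewrite -ltnS => /(_ (ltn_ord t) kt).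
Qed.

Lemma gamma_eq0 : (forall d, gamma_admissible A b d -> d <= 0) -> gamma A b = 0%E.
Proof.
move=> adm_le0; rewrite /gamma; case: ifPn => // /asboolPn adm_ne0.
have adm_0 d : gamma_admissible A b d -> d = 0.
  by move=> ad; apply/eqP; rewrite eq_le adm_le0 // ad.1.
have [d ad] : exists d, gamma_admissible A b d.
  by apply: contrapT => no; apply: adm_ne0; apply/seteqP; split=> d // ad; apply: no; exists d.
suff -> : [set d%:E | d in gamma_admissible A b]%classic = [set 0%:E]%classic.
  exact: ereal_sup1.
apply/seteqP; split=> x /=; first by case=> d' /adm_0 -> <-.
by move=> ->; exists d => //; rewrite (adm_0 d ad).
Qed.

End Applications.

Theorem theorem3 (R : realType) (m : nat) (A : 'M[R]_m) (b : 'rV[R]_m) :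
  explicit_RK A -> non_confluent A -> DJ_irreducible A b ->
  has_negative_coef A b ->
  (exists (N : nat) (dt dx : R) (q : 'I_N -> ('I_N -> R) -> R -> R)
          (u0 : 'I_N -> R),
      (0 < N)%N /\ 0 < dt /\ 0 < dx /\
      (forall k y t, 0 <= q k y t) /\
      (forall k, 0 <= u0 k) /\
      exists (n : nat) (k : 'I_N), rk_sol A b dt dx q u0 n k < 0)
  /\ gamma A b = 0%E.
Proof.
move=> A_explicit A_nc Ab_irr Ab_neg.
have [r [c [ch w_neg]]] := chain_negative_weight A_explicit Ab_irr Ab_neg.
split; first exact: rk_sol_negative A_nc ch w_neg.
by apply: gamma_eq0 => d; apply: gamma_admissible_le0 ch w_neg.
Qed.
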